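(* For the hypercube cluster labeling task $\mathrm{Learn}(n,N,q_{HC},\pi)$, $$I(X_S;P\mid K)\le\mu_1 n\cdot\rho d+\mu_1 n\log N.$$
   Context: Learning task $\mathrm{Learn}(n,N,q_c,\pi)$: a problem instance $P=(D,C)$ with $C=(C_1,\dots,C_N)$ i.i.d. from $q_c$ and $D(j)=\delta_j/\sum_i\delta_i$, $\delta_j$ i.i.d. uniform over entries of the list $\pi$; data set $X$ of $n$ i.i.d. examples, each drawn by picking $j\sim D$ then sampling from subpopulation $j$. $X_S$ is the set of singletons (unique representatives of their subpopulation in $X$), $K=|X_S|$, $\mu_1=\mathbb E[K]/n$. Component distribution $q_{HC}$ (dimension $d$, parameter $\rho$): subpopulation $j$ has $\mathcal I_j\subseteq[d]$ containing each index independently w.p. $\rho$ and uniform bits $b_j(i)$, $i\in\mathcal I_j$; an example from $j$ is $z\in\{0,1\}^d$ with $z(i)=b_j(i)$ on $\mathcal I_j$ and independent uniform bits elsewhere, labeled $j$. Logs base 2. *)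

From HB Require Import structures.
From mathcomp Require Import all_boot all_order all_algebra.
From mathcomp Require Import reals exp.
Set Implicit Arguments. Unset Strict Implicit. Unset Printing Implicit Defensive.
Import Order.TTheory GRing.Theory Num.Theory.
Local Open Scope ring_scope.

Section Info.
Variable R : realType.

Definition log2 (x : R) : R := ln x / ln 2.

Definition prob_eq (Om : finType) (p : Om -> R) (A : eqType) (X : Om -> A) (a : A)
  : R := \sum_(w | X w == a) p w.

Definition cond_mutual_info (Om : finType) (p : Om -> R) (A B C : eqType)
  (X : Om -> A) (Y : Om -> B) (Z : Om -> C) : R :=
  \sum_w p w *
    log2 ((prob_eq p (fun v => (X v, Y v, Z v)) (X w, Y w, Z w) * prob_eq p Z (Z w))
          / (prob_eq p (fun v => (X v, Z v)) (X w, Z w)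
             * prob_eq p (fun v => (Y v, Z v)) (Y w, Z w))).

Definition expect (Om : finType) (p : Om -> R) (f : Om -> R) : R :=
  \sum_w p w * f w.
End Info.

(* Raw sample space of Learn(n,N,q_HC,pi), with m = size pi:
   - for each subpopulation j : 'I_N, an index into pi (delta_j = pi_(index));
   - for each j, the set I_j of fixed coordinates and a uniform bit vector
     b_j on all of [d] (only its restriction to I_j is used / observable);
   - for each example t : 'I_n, its subpopulation label j_t and a uniform
     noise vector u_t in {0,1}^d (used on coordinates outside I_{j_t}). *)
Definition HCOmega (N d n m : nat) :=
  ({ffun 'I_N -> 'I_m} * {ffun 'I_N -> {set 'I_d} * {ffun 'I_d -> bool}}
   * {ffun 'I_n -> 'I_N * {ffun 'I_d -> bool}})%type.

Section HC.
Variables (R : realType) (n N d : nat) (rho : R) (pi : seq R).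
Local Notation m := (size pi).
Local Notation Om := (HCOmega N d n m).

Definition hc_delta (w : Om) (j : 'I_N) : R := nth 0 pi (w.1.1 j).
Definition hc_D (w : Om) (j : 'I_N) : R := hc_delta w j / \sum_i hc_delta w i.
Definition hc_I (w : Om) (j : 'I_N) : {set 'I_d} := (w.1.2 j).1.
Definition hc_b (w : Om) (j : 'I_N) : {ffun 'I_d -> bool} := (w.1.2 j).2.
Definition hc_label (w : Om) (t : 'I_n) : 'I_N := (w.2 t).1.
Definition hc_noise (w : Om) (t : 'I_n) : {ffun 'I_d -> bool} := (w.2 t).2.

Definition hc_z (w : Om) (t : 'I_n) : {ffun 'I_d -> bool} :=
  [ffun i => if i \in hc_I w (hc_label w t) then hc_b w (hc_label w t) i
             else hc_noise w t i].

Definition hc_ex (w : Om) (t : 'I_n) : {ffun 'I_d -> bool} * 'I_N :=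
  (hc_z w t, hc_label w t).

Definition hc_mass (w : Om) : R :=
  (m%:R^-1) ^+ N
  * (\prod_(j : 'I_N) (rho ^+ #|hc_I w j| * (1 - rho) ^+ (d - #|hc_I w j|)
                        * (2^-1) ^+ d))
  * (\prod_(t : 'I_n) (hc_D w (hc_label w t) * (2^-1) ^+ d)).

Definition hc_P (w : Om) :
  ({ffun 'I_N -> R} * {ffun 'I_N -> {set 'I_d} * {ffun 'I_d -> bool}})%type :=
  ([ffun j => hc_D w j],
   [ffun j => (hc_I w j, [ffun i => (i \in hc_I w j) && hc_b w j i])]).

Definition hc_XS (w : Om) : {set {ffun 'I_d -> bool} * 'I_N} :=
  [set hc_ex w t | t in [pred t : 'I_n |
     #|[set t' : 'I_n | hc_label w t' == hc_label w t]| == 1%N]].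

Definition hc_K (w : Om) : nat := #|hc_XS w|.

Definition hc_mu1 : R := expect hc_mass (fun w => (hc_K w)%:R) / n%:R.
End HC.

From HB Require Import structures.
From mathcomp Require Import all_boot all_order all_algebra.
From mathcomp Require Import reals exp.
From mathcomp Require Import ring lra.
Set Implicit Arguments. Unset Strict Implicit. Unset Printing Implicit Defensive.
Import Order.TTheory GRing.Theory Num.Theory.
Local Open Scope ring_scope.

(* Pointwise, the integrand log [p(x,P,k) p(k) / (p(x,k) p(P,k))] is split as
     log [p(x,P,k) / p(P,k)] + log [q(x) / p(x)] + log binom(M, k),
   where M = 2^d N is the number of possible labeled examples and
   q(S) = p(K = |S|) / binom(M, |S|).
   (1) Symmetry: flipping the noise bits of the singletons on the coordinates
       not fixed by their cluster is a mass-preserving involution fixing P and K.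
       The 2^c such flips (c = k d - sum of |I_j| over singleton clusters) give
       2^c distinct values of X_S of equal probability, so the first term is
       at most -c.
   (2) Gibbs: the second term has nonpositive expectation since q has total
       mass 1; and log binom(M, k) <= k log M = k (d + log N).
   (3) Independence: the fixed sets I_j are independent of the labels, with
       E|I_j| = rho d, so E[sum of |I_j| over singleton clusters] = rho d E[K]. *)

Section Log2.
Variable R : realType.

Lemma ln2_gt0 : 0 < ln (2 : R).
Proof. by rewrite ln_gt0 // ltr1n. Qed.

Lemma log2M (x y : R) : 0 < x -> 0 < y -> log2 (x * y) = log2 x + log2 y.
Proof. by move=> x0 y0; rewrite /log2 lnM ?posrE // mulrDl. Qed.

Lemma ler_log2 (x y : R) : 0 < x -> x <= y -> log2 x <= log2 y.
Proof.
move=> x0 xy; rewrite /log2 ler_pM2r ?invr_gt0 ?ln2_gt0 //.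
by rewrite ler_ln ?posrE // (lt_le_trans x0).
Qed.

Lemma log2_exp2 (s : nat) : log2 (2 ^ s)%:R = s%:R :> R.
Proof.
by rewrite /log2 natrX lnXn ?ltr0n // mulrnAl mulfV // gt_eqF ?ln2_gt0.
Qed.

Lemma log2V (x : R) : 0 < x -> log2 x^-1 = - log2 x.
Proof. by move=> x0; rewrite /log2 lnV ?posrE // mulNr. Qed.

Lemma log2_ratio_le (a e : R) (s : nat) : 0 < a -> a * (2 ^ s)%:R <= e ->
  log2 (a / e) <= - s%:R.
Proof.
move=> a0 ae; have pow0 : 0 < (2 ^ s)%:R :> R by rewrite ltr0n expn_gt0.
have e0 : 0 < e by apply: lt_le_trans ae; rewrite mulr_gt0.
rewrite -log2_exp2 -log2V //; apply: ler_log2; first by rewrite divr_gt0.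
by rewrite ler_pdivrMr // mulrC ler_pdivlMr.
Qed.

Lemma log2_ratio_split (a b c e C : R) :
  0 < a -> 0 < b -> 0 < c -> 0 < e -> 0 < C ->
  log2 (a * b / (c * e)) = log2 (a / e) + log2 (b / C / c) + log2 C.
Proof.
move=> a0 b0 c0 e0 C0.
have -> : a * b / (c * e) = (a / e) * (b / C / c) * C.
  by field; rewrite (gt_eqF C0) (gt_eqF c0) (gt_eqF e0).
by rewrite !log2M ?mulr_gt0 ?divr_gt0 ?invr_gt0.
Qed.

Lemma log2_le_sub1 (x : R) : 0 < x -> log2 x <= (x - 1) / ln 2.
Proof.
move=> x0; rewrite /log2 ler_pM2r ?invr_gt0 ?ln2_gt0 //.
have := @le_ln1Dx R (x - 1); rewrite [1 + _]addrC subrK; apply.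
by rewrite ltrBrDl addrN.
Qed.

(* binom(a, k) <= a^k, via binom(a, k) k! = a (a-1) ... (a-k+1). *)
Lemma binomial_le_exp (a k : nat) : ('C(a, k) <= a ^ k)%N.
Proof.
apply: (@leq_trans ('C(a, k) * k`!)); first by rewrite leq_pmulr ?fact_gt0.
rewrite bin_ffact; elim: k => [|k IH]; first by rewrite ffactn0.
by rewrite ffactnSr expnSr leq_mul // leq_subr.
Qed.

Lemma log2_binomial_le (M k : nat) : (0 < M)%N -> (k <= M)%N ->
  log2 ('C(M, k))%:R <= k%:R * log2 M%:R :> R.
Proof.
move=> M0 kM.
apply: (@le_trans _ _ (log2 (M%:R ^+ k))).
  by apply: ler_log2; rewrite ?ltr0n ?bin_gt0 // -natrX ler_nat binomial_le_exp.
by rewrite /log2 lnXn ?ltr0n // !mulrnAl mul1r.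
Qed.

End Log2.

Lemma triple_eqE (A B C : eqType) (a a' : A) (b b' : B) (c c' : C) :
  ((a, b, c) == (a', b', c')) = [&& a == a', b == b' & c == c'].
Proof. by rewrite !xpair_eqE andbA. Qed.

Section DiscreteProbability.
Variables (R : realType) (Om : finType) (p : Om -> R).
Hypothesis p_ge0 : forall w, 0 <= p w.

Lemma prob_eq_ge0 (A : eqType) (V : Om -> A) a : 0 <= prob_eq p V a.
Proof. by apply: sumr_ge0 => v _; exact: p_ge0. Qed.

Lemma mass_le_prob_eq (A : eqType) (V : Om -> A) w : p w <= prob_eq p V (V w).
Proof. by rewrite /prob_eq (bigD1 w) //= lerDl; apply: sumr_ge0 => v _. Qed.

Lemma prob_eq_gt0 (A : eqType) (V : Om -> A) w : 0 < p w -> 0 < prob_eq p V (V w).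
Proof. by move=> pw; apply: lt_le_trans pw (mass_le_prob_eq V w). Qed.

(* Pairwise distinct values a f of W that all lie in the fibre g^-1 b describe
   disjoint events contained in {g o W = b}. *)
Lemma sum_prob_eq_distinct (I : finType) (F : {set I}) (A B : eqType)
    (W : Om -> A) (g : A -> B) (a : I -> A) (b : B) :
  {in F &, injective a} -> (forall f, f \in F -> g (a f) = b) ->
  \sum_(f in F) prob_eq p W (a f) <= prob_eq p (g \o W) b.
Proof.
move=> a_inj a_fibre; rewrite /prob_eq.
under eq_bigr do rewrite big_mkcond /=.
rewrite exchange_big /= [X in _ <= X]big_mkcond /=; apply: ler_sum => v _.
have le_mass : 0 <= (if g (W v) == b then p v else 0) by case: ifP.
case: (pickP [pred f in F | W v == a f]) => [f0 /andP [f0F /eqP Wf0] | none].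
- rewrite (bigD1 f0) //= Wf0 eqxx a_fibre // eqxx big1 ?addr0 // => f /andP [fF f_f0].
  by case: eqP => // af; case/eqP: f_f0; apply: a_inj.
- by rewrite big1 // => f fF; have := none f; rewrite /= fF /= => ->.
Qed.

Lemma gibbs_inequality (U : finType) (V : Om -> U) (q : U -> R) :
  (forall u, 0 <= q u) -> (forall w, 0 < p w -> 0 < q (V w)) ->
  \sum_u q u <= \sum_w p w ->
  \sum_w p w * log2 (q (V w) / prob_eq p V (V w)) <= 0.
Proof.
move=> q_ge0 q_gt0 q_mass.
pose ratio w := q (V w) / prob_eq p V (V w).
apply: (@le_trans _ _ (\sum_w p w * ((ratio w - 1) / ln 2))).
  apply: ler_sum => w _; have [pw0|pw_neq0] := eqVneq (p w) 0.
    by rewrite pw0 !mul0r.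
  have pw : 0 < p w by rewrite lt_def pw_neq0 p_ge0.
  apply: ler_wpM2l => //; apply: log2_le_sub1.
  by rewrite divr_gt0 ?q_gt0 ?prob_eq_gt0.
have fibres : \sum_w p w * ratio w <= \sum_u q u.
  rewrite (partition_big V xpredT) //=; apply: ler_sum => u _.
  rewrite (eq_bigr (fun w => p w * (q u / prob_eq p V u))); last first.
    by move=> w /eqP Vw; rewrite /ratio Vw.
  rewrite -big_distrl /= -/(prob_eq p V u) mulrCA.
  have [->|nz] := eqVneq (prob_eq p V u) 0; first by rewrite invr0 !mulr0.
  by rewrite mulfV // mulr1.
under eq_bigr do rewrite mulrA mulrBr mulr1.
rewrite -mulr_suml pmulr_lle0 ?invr_gt0 ?ln2_gt0 // sumrB subr_le0.
exact: le_trans fibres q_mass.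
Qed.

End DiscreteProbability.

Section RandomSubset.
Variables (R : realType) (rho : R) (d : nat).

Definition subset_weight (J : {set 'I_d}) : R :=
  rho ^+ #|J| * (1 - rho) ^+ (d - #|J|).

Lemma subset_weightE J :
  subset_weight J = \prod_i (if i \in J then rho else 1 - rho).
Proof.
rewrite (bigID (mem J)) /= /subset_weight; congr (_ * _).
  by rewrite (eq_bigr (fun _ => rho)) ?prodr_const // => i ->.
rewrite (eq_bigr (fun _ => 1 - rho)) => [|i /negbTE ->] //.
rewrite prodr_const; congr (_ ^+ _).
have card_split : (#|J| + #|[predC J]| = d)%N by rewrite cardC card_ord.
rewrite -[X in (X - _)%N]card_split addKn.
by apply: eq_card => i; rewrite !inE.
Qed.

Lemma sum_subset_prod (c : 'I_d -> R) :
  \sum_(J : {set 'I_d}) \prod_i (if i \in J then rho else c i) = \prod_i (rho + c i).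
Proof. by rewrite bigA_distr. Qed.

Lemma sum_subset_weight : \sum_J subset_weight J = 1.
Proof.
under eq_bigr do rewrite subset_weightE.
by rewrite sum_subset_prod big1 // => i _; rewrite addrC subrK.
Qed.

(* The expected size of the random subset is rho d: each index i contributes
   its inclusion probability rho. *)
Lemma mean_subset_size : \sum_J subset_weight J * #|J|%:R = rho * d%:R.
Proof.
have size_sum (J : {set 'I_d}) : #|J|%:R = \sum_i (i \in J)%:R :> R.
  by rewrite -sum1_card natr_sum big_mkcond; apply: eq_bigr => i _; case: (i \in J).
under eq_bigr do rewrite size_sum big_distrr /=.
rewrite exchange_big /= mulr_natr -[in RHS](card_ord d) -sumr_const.
apply: eq_bigr => i0 _.
have only_i0 (J : {set 'I_d}) : subset_weight J * (i0 \in J)%:R =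
    \prod_i (if i \in J then rho else if i == i0 then 0 else 1 - rho).
  rewrite subset_weightE (bigD1 i0) //= [RHS](bigD1 i0) //= eqxx.
  case: (boolP (i0 \in J)) => i0J; last by rewrite !mul0r mulr0.
  rewrite mulr1; congr (_ * _); apply: eq_bigr => i /negbTE ii0.
  by rewrite ii0.
under eq_bigr do rewrite only_i0.
rewrite sum_subset_prod (bigD1 i0) //= eqxx addr0 big1 ?mulr1 // => i /negbTE ->.
by rewrite addrC subrK.
Qed.

End RandomSubset.

Section HypercubeSymmetry.
Variables (R : realType) (n N d : nat) (rho : R) (pi : seq R).
Local Notation m := (size pi).
Local Notation Om := (HCOmega N d n m).
Local Notation Example := ({ffun 'I_d -> bool} * 'I_N)%type.
Local Notation Flip := {ffun 'I_N -> {ffun 'I_d -> bool}}.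
Local Notation mass := (@hc_mass R n N d rho pi).
Local Notation XS := (@hc_XS R n N d pi).
Local Notation P := (@hc_P R n N d pi).
Local Notation K := (@hc_K R n N d pi).
Local Notation label := (@hc_label R n N d pi).
Local Notation fixed := (@hc_I R n N d pi).
Hypotheses (pi_gt0 : all (fun x => 0 < x) pi) (rho01 : 0 <= rho <= 1).

Lemma mass_ge0 (w : Om) : 0 <= mass w.
Proof.
case/andP: rho01 => rho0 rho1; have half0 : 0 <= (2^-1 : R) by rewrite invr_ge0.
have delta_ge0 j : 0 <= hc_delta w j.
  by apply: ltW; apply: (all_nthP 0 pi_gt0); rewrite ltn_ord.
rewrite /hc_mass !mulr_ge0 ?exprn_ge0 ?invr_ge0 //.
  by apply: prodr_ge0 => j _; rewrite !mulr_ge0 ?exprn_ge0 ?subr_ge0.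
apply: prodr_ge0 => t _; rewrite mulr_ge0 ?exprn_ge0 // /hc_D divr_ge0 //.
exact: sumr_ge0.
Qed.

Definition flip_noise (f : Flip) (w : Om) : Om :=
  (w.1, [ffun t => ((w.2 t).1, [ffun i => (w.2 t).2 i (+) f (w.2 t).1 i])]).

Definition flip_example (f : Flip) (e : Example) : Example :=
  ([ffun i => e.1 i (+) f e.2 i], e.2).
Definition flip_set (f : Flip) (S : {set Example}) : {set Example} :=
  flip_example f @: S.

Lemma flip_noiseK (f : Flip) : involutive (flip_noise f).
Proof.
move=> [a e]; congr (_, _); apply/ffunP => t; rewrite !ffunE /=.
case: (e t) => j z /=; congr (_, _); apply/ffunP => i.
by rewrite !ffunE -addbA addbb addbF.
Qed.

Lemma flip_exampleK (f : Flip) : involutive (flip_example f).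
Proof.
move=> [z j]; congr (_, _); apply/ffunP => i.
by rewrite !ffunE -addbA addbb addbF.
Qed.

Lemma flip_set_inj (f : Flip) : injective (flip_set f).
Proof.
apply: inv_inj => S; rewrite /flip_set -imset_comp (eq_imset (g := id)).
  exact: imset_id.
by move=> e; rewrite /= flip_exampleK.
Qed.

Lemma card_flip_set (f : Flip) S : #|flip_set f S| = #|S|.
Proof. by rewrite card_imset //; exact: inv_inj (flip_exampleK f). Qed.

Lemma label_flip_noise (f : Flip) w t : label (flip_noise f w) t = label w t.
Proof. by rewrite /hc_label ffunE. Qed.

(* Noise bits are uniform, so flipping them preserves the mass. *)
Lemma mass_flip_noise (f : Flip) w : mass (flip_noise f w) = mass w.
Proof.
by rewrite /hc_mass; congr (_ * _); apply: eq_bigr => t _; rewrite label_flip_noise.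
Qed.

Lemma ex_flip_noise (f : Flip) w t :
  (forall j i, i \in fixed w j -> f j i = false) ->
  hc_ex (flip_noise f w) t = flip_example f (hc_ex w t).
Proof.
move=> f_free; rewrite /hc_ex /flip_example /= label_flip_noise; congr (_, _).
apply/ffunP => i; rewrite /hc_z !ffunE label_flip_noise.
rewrite /hc_I /hc_b /hc_noise /hc_label /flip_noise /= !ffunE /=.
by case: ifP => [/f_free -> | _]; rewrite ?addbF.
Qed.

Lemma XS_flip_noise (f : Flip) w :
  (forall j i, i \in fixed w j -> f j i = false) ->
  XS (flip_noise f w) = flip_set f (XS w).
Proof.
move=> f_free; rewrite /flip_set /hc_XS -imset_comp.
have same_singletons t :
  (#|[set t' | label (flip_noise f w) t' == label (flip_noise f w) t]| == 1%N) =
  (#|[set t' | label w t' == label w t]| == 1%N).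
  suff -> : [set t' | label (flip_noise f w) t' == label (flip_noise f w) t] =
            [set t' | label w t' == label w t] by [].
  by apply/setP => t'; rewrite !inE !label_flip_noise.
apply/setP => e; apply/imsetP/imsetP => -[t t_single ->]; exists t.
- by move: t_single; rewrite !inE same_singletons.
- by rewrite /= ex_flip_noise.
- by move: t_single; rewrite !inE same_singletons.
- by rewrite /= ex_flip_noise.
Qed.

Definition singleton_labels (w : Om) : {set 'I_N} := [set e.2 | e in XS w].

Lemma mem_singleton_labels w j :
  (j \in singleton_labels w) = (#|[set t | label w t == j]| == 1%N).
Proof.
apply/imsetP/idP => [[_ /imsetP [t t_single ->] ->] | /cards1P [t t_only]].
  by move: t_single; rewrite inE.
have : t \in [set t | label w t == j] by rewrite t_only inE.
rewrite inE => /eqP t_j; exists (hc_ex w t); last by rewrite /= t_j.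
by apply/imsetP; exists t; rewrite // inE /= t_j t_only cards1.
Qed.

Lemma XS_label_inj w : {in XS w &, injective snd}.
Proof.
move=> _ _ /imsetP [t t_single ->] /imsetP [t' _ ->] /= same_label.
move: t_single; rewrite inE /= => /cards1P [t0 only_t0].
have : t \in [set t'' | label w t'' == label w t] by rewrite inE.
have : t' \in [set t'' | label w t'' == label w t] by rewrite inE -same_label.
by rewrite only_t0 !inE => /eqP -> /eqP ->.
Qed.

Lemma K_singleton_labels w : K w = #|singleton_labels w|.
Proof. by rewrite card_in_imset //; exact: XS_label_inj. Qed.

Lemma fixed_P w j : fixed w j = ((P w).2 j).1.
Proof. by rewrite /hc_P ffunE. Qed.

(* Free cells: coordinates of singletons that are not fixed by their cluster,
   i.e. that carry pure noise. *)
Definition free_cells (w : Om) : {set 'I_N * 'I_d} :=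
  [set ji | (ji.1 \in singleton_labels w) && (ji.2 \notin fixed w ji.1)].

Lemma card_free_cells w :
  (#|free_cells w| + \sum_(j in singleton_labels w) #|fixed w j| =
   #|singleton_labels w| * d)%N.
Proof.
rewrite -sum1_card (eq_bigl (fun ji => (ji.1 \in singleton_labels w) &&
                                       (ji.2 \notin fixed w ji.1))); last first.
  by move=> ji; rewrite inE.
rewrite -(pair_big_dep (mem (singleton_labels w)) (fun j i => i \notin fixed w j)
                       (fun _ _ => 1%N)) /=.
rewrite -big_split /= -sum_nat_const; apply: eq_bigr => j _.
rewrite sum1_card addnC -[RHS](card_ord d) -(cardC (mem (fixed w j))).
by congr (_ + _)%N; apply: eq_card => i; rewrite !inE.
Qed.

Definition admissible_flips (w : Om) : {set Flip} :=
  [set f : Flip | [forall j, [forall i, f j i ==> ((j, i) \in free_cells w)]]].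

Lemma card_admissible_flips w : (2 ^ #|free_cells w| <= #|admissible_flips w|)%N.
Proof.
pose indicator (S : {set 'I_N * 'I_d}) : Flip :=
  [ffun j => [ffun i => (j, i) \in S]].
have indicator_inj : injective indicator.
  move=> S S' eqSS'; apply/setP => -[j i].
  by have := congr1 (fun f : Flip => f j i) eqSS'; rewrite !ffunE.
rewrite -card_powerset -(card_imset _ indicator_inj); apply: subset_leq_card.
apply/subsetP => f /imsetP [S]; rewrite inE => /subsetP S_free ->.
rewrite inE; apply/forallP => j; apply/forallP => i; rewrite !ffunE.
by apply/implyP => /S_free.
Qed.

Lemma admissible_flip_free (f : Flip) w v : f \in admissible_flips w ->
  P v = P w -> forall j i, i \in fixed v j -> f j i = false.
Proof.
rewrite inE => /forallP f_adm same_P j i.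
rewrite fixed_P same_P -fixed_P => i_fixed.
apply/negP => fji; have := implyP (forallP (f_adm j) i) fji.
by rewrite inE /= i_fixed andbF.
Qed.

Lemma flip_set_inj_admissible w :
  {in admissible_flips w &, injective (flip_set ^~ (XS w))}.
Proof.
move=> f g; rewrite !inE => /forallP f_adm /forallP g_adm same_image.
apply/ffunP => j; apply/ffunP => i.
case: (boolP (j \in singleton_labels w)) => [/imsetP [e eX ->] | j_nsingle].
  have : flip_example f e \in flip_set g (XS w) by rewrite -same_image imset_f.
  case/imsetP => e' e'X fe_ge'.
  have e_e' : e = e' by apply: (XS_label_inj eX e'X); move: fe_ge'; case.
  have := congr1 (fun e : Example => e.1 i) fe_ge'; rewrite -e_e' /= !ffunE.
  by case: (e.1 i); case: (f e.2 i); case: (g e.2 i).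
have not_free (h : Flip) :
    [forall i, h j i ==> ((j, i) \in free_cells w)] -> h j i = false.
  move=> /forallP/(_ i)/implyP h_adm; apply/negP => /h_adm.
  by rewrite inE (negbTE j_nsingle).
by rewrite (not_free f (f_adm j)) (not_free g (g_adm j)).
Qed.

Local Notation XPK := (fun v => (XS v, P v, K v)).

(* The admissible flips of w preserve the probability of the value of
   (X_S, P, K) at w: flip_noise f is a mass-preserving involution that fixes P
   and K and acts on X_S through flip_set f. *)
Lemma prob_flip_invariant (f : Flip) w : f \in admissible_flips w ->
  prob_eq mass XPK (flip_set f (XS w), P w, K w) =
  prob_eq mass XPK (XS w, P w, K w).
Proof.
move=> f_adm; rewrite /prob_eq (reindex_inj (inv_inj (flip_noiseK f))) /=.
apply: eq_big => v; last by rewrite mass_flip_noise.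
rewrite !triple_eqE; have [same_P|] := eqVneq (P v) (P w); last by rewrite !andbF.
rewrite XS_flip_noise; last exact: admissible_flip_free same_P.
by rewrite /hc_K XS_flip_noise ?card_flip_set ?(inj_eq (@flip_set_inj f)) //;
  exact: admissible_flip_free same_P.
Qed.

(* Symmetry bound: the 2^c admissible flips, c the number of free cells, give
   2^c distinct values of (X_S, P, K) of equal probability, all with the same
   (P, K); hence p(x, P, k) 2^c <= p(P, k). *)
Lemma joint_prob_le w :
  prob_eq mass XPK (XS w, P w, K w) * (2 ^ #|free_cells w|)%:R <=
  prob_eq mass (fun v => (P v, K v)) (P w, K w).
Proof.
pose image f := (flip_set f (XS w), P w, K w).
have image_inj : {in admissible_flips w &, injective image}.
  move=> f g f_adm g_adm /(congr1 (fun t => t.1.1)) same_set.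
  exact: flip_set_inj_admissible f_adm g_adm same_set.
apply: le_trans (sum_prob_eq_distinct mass_ge0 XPK (g := fun t => (t.1.2, t.2))
                   (b := (P w, K w)) image_inj (fun f _ => erefl)).
rewrite (eq_bigr (fun _ => prob_eq mass XPK (XS w, P w, K w))); last first.
  by move=> f f_adm; rewrite /image prob_flip_invariant.
rewrite sumr_const mulr_natr; apply: ler_wpMn2l.
  exact: (prob_eq_ge0 mass_ge0).
exact: card_admissible_flips.
Qed.

End HypercubeSymmetry.

Section ClusterIndependence.
Variables (R : realType) (n N d : nat) (rho : R) (pi : seq R).
Local Notation m := (size pi).
Local Notation Om := (HCOmega N d n m).
Local Notation mass := (@hc_mass R n N d rho pi).
Local Notation Cluster := ({set 'I_d} * {ffun 'I_d -> bool})%type.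
Local Notation Clusters := {ffun 'I_N -> Cluster}.
Local Notation Weights := {ffun 'I_N -> 'I_m}.
Local Notation Examples := {ffun 'I_n -> 'I_N * {ffun 'I_d -> bool}}.

Definition cluster_prob (c : Cluster) : R := subset_weight rho c.1 * (2^-1) ^+ d.

Definition clusters_weight (cs : Clusters) : R := \prod_j cluster_prob (cs j).

Definition labels_weight (a : Weights) (e : Examples) : R :=
  (m%:R^-1) ^+ N *
  \prod_t (nth 0 pi (a (e t).1) / (\sum_i nth 0 pi (a i)) * (2^-1) ^+ d).

Lemma mass_factor (w : Om) : mass w = clusters_weight w.1.2 * labels_weight w.1.1 w.2.
Proof. by rewrite /hc_mass /clusters_weight /cluster_prob mulrAC mulrC. Qed.

Lemma expect_factor (G : Examples -> R) (H : Clusters -> R) :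
  \sum_(w : Om) mass w * (G w.2 * H w.1.2) =
  (\sum_cs clusters_weight cs * H cs) * \sum_a \sum_e labels_weight a e * G e.
Proof.
have regroup : \sum_a \sum_cs \sum_e mass (a, cs, e) * (G e * H cs) =
                \sum_(w : Om) mass w * (G w.2 * H w.1.2).
  rewrite (pair_bigA _ (fun a cs => \sum_e mass (a, cs, e) * (G e * H cs))) /=.
  rewrite (pair_bigA _ (fun ac e => mass (ac.1, ac.2, e) * (G e * H ac.2))) /=.
  by apply: eq_bigr => -[[a cs] e].
rewrite -regroup mulrC big_distrl /=; apply: eq_bigr => a _.
rewrite mulrC big_distrl /=; apply: eq_bigr => cs _.
rewrite big_distrr /=; apply: eq_bigr => e _.
by rewrite mass_factor /=; ring.
Qed.

Lemma sum_cluster_prob (h : {set 'I_d} -> R) :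
  \sum_(c : Cluster) cluster_prob c * h c.1 = \sum_J subset_weight rho J * h J.
Proof.
rewrite -(pair_bigA _ (fun J b => cluster_prob (J, b) * h J)) /=.
have half_pow : (2^-1 : R) ^+ d * (2 ^ d)%:R = 1.
  by rewrite natrX -exprMn mulVf ?pnatr_eq0 // expr1n.
apply: eq_bigr => J _.
rewrite (eq_bigr (fun _ => subset_weight rho J * (2^-1) ^+ d * h J)) //.
rewrite sumr_const card_ffun card_bool card_ord -[_ *+ (2 ^ d)]mulr_natr.
rewrite -!mulrA [h J * _]mulrC [_ ^+ d * (_ * _)]mulrA half_pow mul1r.
by rewrite mulrCA.
Qed.

Lemma cluster_marginal j0 (h : {set 'I_d} -> R) :
  \sum_(cs : Clusters) clusters_weight cs * h (cs j0).1 =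
  \sum_J subset_weight rho J * h J.
Proof.
pose h' j (c : Cluster) := if j == j0 then h c.1 else 1.
have -> : \sum_(cs : Clusters) clusters_weight cs * h (cs j0).1 =
          \sum_(cs : Clusters) \prod_j (cluster_prob (cs j) * h' j (cs j)).
  apply: eq_bigr => cs _; rewrite big_split /=; congr (_ * _).
  by rewrite (bigD1 j0) //= /h' eqxx big1 ?mulr1 // => j /negbTE ->.
rewrite -(bigA_distr_bigA (fun j c => cluster_prob c * h' j c)) /= (bigD1 j0) //=.
rewrite /h' eqxx sum_cluster_prob [X in _ * X]big1 ?mulr1 // => j /negbTE ->.
rewrite (sum_cluster_prob (fun _ => 1)) -[RHS](sum_subset_weight rho d).
by apply: eq_bigr => J _; rewrite mulr1.
Qed.

Lemma expect_fixed_size (G : Examples -> R) j0 :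
  \sum_(w : Om) mass w * (G w.2 * #|(w.1.2 j0).1|%:R) =
  rho * d%:R * \sum_(w : Om) mass w * G w.2.
Proof.
rewrite (expect_factor G (fun cs => #|(cs j0).1|%:R)).
rewrite (cluster_marginal j0 (fun J => #|J|%:R)) mean_subset_size.
under [in RHS]eq_bigr do rewrite -[G _]mulr1.
rewrite (expect_factor G (fun _ => 1)) (cluster_marginal j0 (fun _ => 1)).
rewrite (eq_bigr (@subset_weight R rho d)) ?sum_subset_weight ?mul1r // => J _.
exact: mulr1.
Qed.

End ClusterIndependence.

Section Assembly.
Variables (R : realType) (n N d : nat) (rho : R) (pi : seq R).
Hypotheses (N_gt0 : (0 < N)%N) (pi_gt0 : all (fun x => 0 < x) pi)
           (rho01 : 0 <= rho <= 1).
Local Notation m := (size pi).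
Local Notation Om := (HCOmega N d n m).
Local Notation Example := ({ffun 'I_d -> bool} * 'I_N)%type.
Local Notation mass := (@hc_mass R n N d rho pi).
Local Notation XS := (@hc_XS R n N d pi).
Local Notation P := (@hc_P R n N d pi).
Local Notation K := (@hc_K R n N d pi).
Local Notation fixed := (@hc_I R n N d pi).

Definition n_examples : nat := (2 ^ d * N)%N.

Lemma card_examples : #|{: Example}| = n_examples.
Proof. by rewrite card_prod card_ffun card_bool !card_ord. Qed.

Lemma K_le_examples w : (K w <= n_examples)%N.
Proof. by rewrite -card_examples max_card. Qed.

Lemma K_le_n w : (K w <= n)%N.
Proof.
apply: leq_trans (leq_imset_card _ _) _.
by rewrite -[n in (_ <= n)%N]card_ord max_card.
Qed.

Lemma n_examples_gt0 : (0 < n_examples)%N.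
Proof. by rewrite muln_gt0 expn_gt0. Qed.

Lemma log2_n_examples : log2 n_examples%:R = d%:R + log2 N%:R :> R.
Proof. by rewrite natrM log2M ?ltr0n ?expn_gt0 // log2_exp2. Qed.

(* Reference weights for the Gibbs inequality: the probability that K = k,
   spread uniformly over the binom(2^d N, k) sets of k examples. *)
Definition size_uniform (S : {set Example}) : R :=
  prob_eq mass K #|S| / ('C(n_examples, #|S|))%:R.

Lemma sum_size_uniform : \sum_S size_uniform S = \sum_w mass w.
Proof.
rewrite /size_uniform /prob_eq.
under eq_bigr => S _ do rewrite big_distrl /= big_mkcond /=.
rewrite exchange_big /=; apply: eq_bigr => v _.
rewrite (eq_bigr (fun S : {set Example} =>
  if S \in [set S : {set Example} | #|S| == K v]
  then mass v / ('C(n_examples, K v))%:R else 0)); last first.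
  by move=> S _; rewrite inE eq_sym; case: eqP => // ->.
rewrite -big_mkcond /= sumr_const card_draws card_examples.
by rewrite -[_ *+ _]mulr_natr divfK // pnatr_eq0 -lt0n bin_gt0 K_le_examples.
Qed.

(* K is a function of X_S, so conditioning on K adds nothing to X_S. *)
Lemma prob_XS_K w :
  prob_eq mass (fun v => (XS v, K v)) (XS w, K w) = prob_eq mass XS (XS w).
Proof.
apply: eq_bigl => v; rewrite xpair_eqE.
by apply: andb_idr => /eqP same_XS; rewrite /hc_K same_XS.
Qed.

Lemma gibbs_singletons :
  \sum_w mass w * log2 (size_uniform (XS w) / prob_eq mass XS (XS w)) <= 0.
Proof.
apply: (gibbs_inequality (mass_ge0 pi_gt0 rho01) (V := XS) (q := size_uniform));
  last by rewrite sum_size_uniform.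
  by move=> S; rewrite divr_ge0 ?ler0n ?prob_eq_ge0 //; exact: mass_ge0.
move=> w mass_gt0; rewrite divr_gt0 ?ltr0n ?bin_gt0 ?K_le_examples //.
exact: (prob_eq_gt0 (mass_ge0 pi_gt0 rho01) K mass_gt0).
Qed.

Definition singleton_fixed_size (w : Om) : R :=
  \sum_(j in singleton_labels w) #|fixed w j|%:R.

(* The pointwise bound on the integrand of I(X_S; P | K): symmetry contributes
   -(#free cells) = -(K d - singleton_fixed_size), the binomial coefficient
   K (d + log2 N), and the rest is the Gibbs term. *)
Lemma pointwise_bound w :
  mass w * log2 (prob_eq mass (fun v => (XS v, P v, K v)) (XS w, P w, K w)
                 * prob_eq mass K (K w)
                 / (prob_eq mass (fun v => (XS v, K v)) (XS w, K w)
                    * prob_eq mass (fun v => (P v, K v)) (P w, K w)))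
  <= mass w * log2 (size_uniform (XS w) / prob_eq mass XS (XS w))
     + mass w * (singleton_fixed_size w + (K w)%:R * log2 N%:R).
Proof.
have mass_ge0w : forall v : Om, 0 <= mass v := mass_ge0 pi_gt0 rho01.
have [->|mass_neq0] := eqVneq (mass w) 0; first by rewrite !mul0r addr0.
have mass_gt0 : 0 < mass w by rewrite lt_def mass_neq0 mass_ge0w.
have pos (A : eqType) (V : Om -> A) : 0 < prob_eq mass V (V w).
  exact: (prob_eq_gt0 mass_ge0w V mass_gt0).
have binom_gt0 : 0 < ('C(n_examples, K w))%:R :> R.
  by rewrite ltr0n bin_gt0 K_le_examples.
have symmetry := log2_ratio_le (pos _ _) (joint_prob_le pi_gt0 rho01 w).
have binomial : log2 ('C(n_examples, K w))%:R <= (K w)%:R * log2 n_examples%:R :> R.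
  exact: (log2_binomial_le R n_examples_gt0 (K_le_examples w)).
have cells : #|free_cells w|%:R = (K w)%:R * d%:R - singleton_fixed_size w :> R.
  have := card_free_cells w; rewrite -K_singleton_labels.
  move=> /(congr1 (fun k => k%:R : R)); rewrite natrD natrM natr_sum => <-.
  by rewrite /singleton_fixed_size addrK.
rewrite prob_XS_K (log2_ratio_split (pos _ _) (pos _ _) (pos _ _) (pos _ _) binom_gt0).
rewrite -mulrDr; apply: ler_wpM2l; first exact: ltW.
rewrite log2_n_examples cells in binomial symmetry.
lra.
Qed.

(* Independence, summed over the clusters j weighted by "j is a singleton
   label" (a function of the labels only). *)
Lemma expect_singleton_fixed_size :
  \sum_w mass w * singleton_fixed_size w = rho * d%:R * \sum_w mass w * (K w)%:R.
Proof.
pose single (e : {ffun 'I_n -> 'I_N * {ffun 'I_d -> bool}}) j : R :=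
  (#|[set t | (e t).1 == j]| == 1%N)%:R.
have single_mem (w : Om) j : single w.2 j = (j \in singleton_labels w)%:R.
  by rewrite mem_singleton_labels.
have singleton_sum (F : 'I_N -> R) (w : Om) :
    \sum_(j in singleton_labels w) F j = \sum_j single w.2 j * F j.
  rewrite big_mkcond; apply: eq_bigr => j _; rewrite single_mem.
  by case: (j \in _); rewrite ?mul1r ?mul0r.
have K_sum (w : Om) : (K w)%:R = \sum_j single w.2 j.
  rewrite K_singleton_labels -sum1_card natr_sum singleton_sum.
  by under eq_bigr do rewrite mulr1.
under eq_bigr do rewrite /singleton_fixed_size singleton_sum big_distrr /=.
under [in RHS]eq_bigr do rewrite K_sum big_distrr /=.
rewrite exchange_big [in RHS]exchange_big /= big_distrr /=.
by apply: eq_bigr => j _; exact: (expect_fixed_size rho pi (fun e => single e j) j).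
Qed.

(* mu_1 n is the expected number of singletons (trivially so when n = 0,
   where K = 0). *)
Lemma mu1_expect_K : hc_mu1 n N d rho pi * n%:R = \sum_w mass w * (K w)%:R.
Proof.
rewrite /hc_mu1 /expect; have [n0|n_neq0] := eqVneq n 0%N; last first.
  by rewrite divfK // pnatr_eq0.
have -> : n%:R = 0 :> R by rewrite n0.
rewrite mulr0 big1 // => w _.
by move: (K_le_n w); rewrite [X in (_ <= X)%N]n0 leqn0 => /eqP ->; rewrite mulr0.
Qed.

End Assembly.

Theorem lemma4p1 (R : realType) (n N d : nat) (rho : R) (pi : seq R) :
  (0 < N)%N -> (0 < size pi)%N -> all (fun x => 0 < x) pi ->
  0 <= rho <= 1 ->
  cond_mutual_info (@hc_mass R n N d rho pi) (@hc_XS R n N d pi)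
    (@hc_P R n N d pi) (@hc_K R n N d pi)
  <= @hc_mu1 R n N d rho pi * n%:R * (rho * d%:R)
     + @hc_mu1 R n N d rho pi * n%:R * log2 N%:R.
Proof.
move=> N_gt0 _ pi_gt0 rho01.
rewrite mu1_expect_K /cond_mutual_info.
apply: le_trans.
  by apply: ler_sum => w _; exact: (pointwise_bound N_gt0 pi_gt0 rho01 w).
rewrite big_split /=.
apply: le_trans; first exact: (lerD (gibbs_singletons n N d pi_gt0 rho01) (lexx _)).
rewrite add0r; under eq_bigr do rewrite mulrDr.
rewrite big_split /= expect_singleton_fixed_size mulrC lerD2l.
by rewrite big_distrl /=; under eq_bigr do rewrite mulrA.
Qed.
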